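(* Let $n\ge 1$ and $k\ge 3$ be integers and $p:=k-2$. Let $\{v_1,\dots,v_n\}$ be an orthonormal basis of $\mathbb{R}^n$ and $\lambda_r,\kappa_r\in\mathbb{R}$ for $r=1,\dots,n$, with $\kappa_r<0$ for all $r$. Let $\mathcal A=\sum_{r=1}^n\lambda_r v_r^{\otimes k}$, $K=\sum_{r=1}^n\kappa_r v_rv_r^\top$, and consider $\dot x=Kx+\mathcal A x^{k-1}$ on $\mathbb{R}^n$. Let $\mathcal I_+:=\{r:\lambda_r>0\}$ and $\mathcal I_-:=\{r:\lambda_r<0\}$. For $r\in\mathcal I_+$ let $c_r:=(-\kappa_r/\lambda_r)^{1/p}>0$, and, when $p$ is odd, for $r\in\mathcal I_-$ let $c_r:=-(\kappa_r/\lambda_r)^{1/p}<0$ (the real $p$-th root of $-\kappa_r/\lambda_r$). (i) If $p$ is even, let $\mathcal R_{\mathrm{even}}:=\{x_0\in\mathbb{R}^n: |v_r^\top x_0|<c_r\ \forall r\in\mathcal I_+\}$. Then for every $x(0)=x_0\in\mathcal R_{\mathrm{even}}$, the solution exists for all $t\ge 0$, satisfies $\lim_{t\to\infty}x(t)=0$, and $\mathcal R_{\mathrm{even}}$ is forward invariant. (ii) If $p$ is odd, let $\mathcal R_{\mathrm{odd}}:=\{x_0\in\mathbb{R}^n: v_r^\top x_0<c_r\ \forall r\in\mathcal I_+,\ v_r^\top x_0>c_r\ \forall r\in\mathcal I_-\}$. Then for every $x(0)=x_0\in\mathcal R_{\mathrm{odd}}$, the solution exists for all $t\ge 0$, satisfies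 $\lim_{t\to\infty}x(t)=0$, and $\mathcal R_{\mathrm{odd}}$ is forward invariant.
   Context: For $v\in\mathbb{R}^n$, $v^{\otimes k}$ is the $k$th-order tensor with entries $(v^{\otimes k})_{i_1\cdots i_k}=v_{i_1}\cdots v_{i_k}$. For a $k$th-order tensor $\mathcal A=(a_{i_1\cdots i_k})$ and $x\in\mathbb{R}^n$, $(\mathcal A x^{k-1})_i=\sum_{i_2,\dots,i_k=1}^n a_{i i_2\cdots i_k}x_{i_2}\cdots x_{i_k}$. *)

From HB Require Import structures.
From mathcomp Require Import all_boot all_order all_algebra.
From mathcomp Require Import all_classical all_reals all_analysis.
Set Implicit Arguments. Unset Strict Implicit. Unset Printing Implicit Defensive.
Import Order.TTheory GRing.Theory Num.Theory.
Import numFieldNormedType.Exports.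
Local Open Scope classical_set_scope.
Local Open Scope ring_scope.

Section Defs.
Variable R : realType.
Variables n k : nat.

Definition dotv (u x : 'cV[R]_n) : R := \sum_(i < n) u i 0 * x i 0.

Definition tensor := {ffun 'I_k -> 'I_n} -> R.

Definition tpow (v : 'cV[R]_n) : tensor :=
  fun idx => \prod_(j < k) v (idx j) 0.

(* (A x^{k-1})_i = sum_{i_2..i_k} a_{i i_2 .. i_k} x_{i_2} ... x_{i_k}:
   sum over multi-indices whose first entry (position 0) equals i,
   weighted by the product of x over the remaining positions. *)
Definition tapply (A : tensor) (x : 'cV[R]_n) : 'cV[R]_n :=
  \col_(i < n) \sum_(idx : {ffun 'I_k -> 'I_n}
                       | [forall j : 'I_k, (val j == 0%N) ==> (idx j == i)])
      A idx * \prod_(j < k | val j != 0%N) x (idx j) 0.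

Definition odeco_tensor (lam : 'I_n -> R) (v : 'I_n -> 'cV[R]_n) : tensor :=
  fun idx => \sum_(r < n) lam r * tpow (v r) idx.

Definition Kmat (kap : 'I_n -> R) (v : 'I_n -> 'cV[R]_n) : 'M[R]_n :=
  \sum_(r < n) kap r *: (v r *m (v r)^T).

Definition vfield (kap lam : 'I_n -> R) (v : 'I_n -> 'cV[R]_n)
  (x : 'cV[R]_n) : 'cV[R]_n :=
  Kmat kap v *m x + tapply (odeco_tensor lam v) x.

Definition global_solution (F : 'cV[R]_n -> 'cV[R]_n) (x0 : 'cV[R]_n)
  (x : R -> 'cV[R]_n) : Prop :=
  x 0 = x0 /\ {within `[0, +oo[%classic, continuous x} /\
  forall t : R, 0 < t -> is_derive t (1 : R) x (F (x t)).

End Defs.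

Definition cthr (R : realType) (p : nat) (kap lam : R) : R :=
  if 0 < lam then powR (- kap / lam) (p%:R^-1)
  else - powR (kap / lam) (p%:R^-1).

Definition Reven (R : realType) (n p : nat) (kap lam : 'I_n -> R)
  (v : 'I_n -> 'cV[R]_n) (x0 : 'cV[R]_n) : Prop :=
  forall r : 'I_n, 0 < lam r -> `|dotv (v r) x0| < cthr p (kap r) (lam r).

Definition Rodd (R : realType) (n p : nat) (kap lam : 'I_n -> R)
  (v : 'I_n -> 'cV[R]_n) (x0 : 'cV[R]_n) : Prop :=
  forall r : 'I_n,
    (0 < lam r -> dotv (v r) x0 < cthr p (kap r) (lam r)) /\
    (lam r < 0 -> cthr p (kap r) (lam r) < dotv (v r) x0).

(* For every x0 in S: the solution exists for all t >= 0, and every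
   (hence the unique) global solution from x0 tends to 0 and stays in S. *)
Definition stable_region (R : realType) (n : nat)
  (F : 'cV[R]_n -> 'cV[R]_n) (S : 'cV[R]_n -> Prop) : Prop :=
  forall x0, S x0 ->
    (exists x, global_solution F x0 x) /\
    (forall x, global_solution F x0 x ->
       (x t @[t --> +oo] --> (0 : 'cV[R]_n)) /\
       (forall t : R, 0 <= t -> S (x t))).

From HB Require Import structures.
From mathcomp Require Import all_boot all_order all_algebra.
From mathcomp Require Import all_classical all_reals all_analysis.
From mathcomp Require Import ring lra.
Set Implicit Arguments. Unset Strict Implicit. Unset Printing Implicit Defensive.
Import Order.TTheory GRing.Theory Num.Theory.
Import numFieldNormedType.Exports.
Local Open Scope classical_set_scope.
Local Open Scope ring_scope.

(** In the orthonormal frame [v], the system decouples: each coordinate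
  [y_r = v_r^T x] solves the scalar Bernoulli equation
  [y' = y (kap_r + lam_r y^p)], and both regions say exactly that the rate
  [kap_r + lam_r y_r(0)^p] is negative.  Since [kap_r < 0], the rate stays
  negative on the whole segment between [0] and [y_r(0)]; a barrier argument
  traps [y_r(t)] in that segment, where [y' <= -d y] forces exponential decay.
  Shrinking coordinates towards [0] preserves both regions, hence invariance.
  Existence comes from the closed-form solution of the Bernoulli equation. *)

Section ScalarODE.
Context {R : realType}.
Implicit Types (f g : R -> R) (a b : R).

Lemma within_continuous_dist (A : set R) f s e :
  {within A, continuous f} -> A s -> 0 < e ->
  exists2 d, 0 < d & forall t, A t -> `|t - s| < d -> `|f t - f s| < e.
Proof.
move=> /subspace_continuousP /(_ s) cf As e0.
have /cvgrPdist_lt/(_ e e0)/nbhs_ballP[d d0 fd] := cf As.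
by exists d => // t At ts; rewrite distrC; apply: fd; rewrite // /ball /= distrC.
Qed.

Lemma last_le_level g a b c : a <= b -> {within `[a, b], continuous g} -> g a <= c ->
  exists s, [/\ a <= s <= b, g s <= c & forall t, s < t <= b -> c < g t].
Proof.
move=> ab cg ga.
set E := [set t | a <= t <= b /\ g t <= c].
have Ea : E a by rewrite /E /= lexx ab.
have supE : has_sup E by split; [exists a | exists b => t [/andP[]]].
set s := sup E.
have as_ : a <= s by exact: sup_upper_bound.
have sb : s <= b by apply: ge_sup; [exists a | move=> t [/andP[]]].
have sab : [set` `[a, b]] s by rewrite /= in_itv /= as_ sb.
exists s; split; first by rewrite as_ sb.
- rewrite leNgt; apply/negP => gs0.
  have gs_c : 0 < g s - c by rewrite subr_gt0.
  have [d d0 gd] := within_continuous_dist cg sab gs_c.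
  have [t [/andP[at_ tb] gt]] := sup_adherent d0 supE; rewrite -/s => st.
  have ts : t <= s by apply: sup_upper_bound => //; rewrite /E /= at_ tb.
  have : `|g t - g s| < g s - c.
    by apply: gd; [rewrite /= in_itv /= at_ tb | rewrite ler0_norm; lra].
  rewrite ltr_norml; lra.
- move=> t /andP[st tb]; rewrite ltNge; apply/negP => gt.
  have : t <= s by apply: sup_upper_bound => //; rewrite /E /= tb gt; split => //; lra.
  lra.
Qed.

Definition scalar_solution (G : R -> R) (y : R -> R) :=
  {within `[0, +oo[, continuous y} /\ forall t : R, 0 < t -> is_derive t 1 y (G (y t)).

Lemma scalar_solution_le G y b : scalar_solution G y ->
  (\forall z \near b^'+, G z < 0) -> y 0 <= b -> forall t : R, 0 <= t -> y t <= b.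
Proof.
move=> [cy dy] /nbhs_ballP[e e0 Gneg] y0b t t0; rewrite leNgt; apply/negP => byt.
have cy_on a c : 0 <= a -> {within `[a, c], continuous y}.
  by move=> a0; apply: continuous_subspaceW cy; apply: subset_itv; rewrite ?bnd_simp.
(* Take the last time [s <= t] with [y s <= b]: right after [s], [y] lies in
   the band [(b, b + e)] where [G < 0], which the MVT on [[s, u]] contradicts. *)
have [s [/andP[s0 st] ysb byt']] := last_le_level t0 (cy_on 0 t (lexx 0)) y0b.
have lt_st : s < t by rewrite lt_neqAle st andbT; apply: contraTneq byt => <-; rewrite -leNgt.
have s_in : [set` `[0, +oo[] s by rewrite /= in_itv /= andbT.
have [d d0 yd] := within_continuous_dist cy s_in e0.
pose u := Num.min t (s + d / 2).
have su : s < u by rewrite lt_min lt_st ltrDl divr_gt0.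
have ut : u <= t by rewrite ge_min lexx.
have usd : u <= s + d / 2 by rewrite ge_min lexx orbT.
have dy_su x : x \in `]s, u[ -> is_derive x 1 y (G (y x)).
  by rewrite in_itv /= => /andP[sx _]; apply: dy; lra.
have [xi /[!in_itv] /= /andP[sxi xiu] E] := MVT su dy_su (cy_on s u s0).
have bxi : b < y xi by apply: byt'; lra.
have xie : y xi < b + e.
  have : `|y xi - y s| < e.
    by apply: yd; [rewrite /= in_itv /= andbT; lra | rewrite ger0_norm; lra].
  rewrite ltr_norml; lra.
have : G (y xi) < 0 by apply: Gneg => //; rewrite /ball /= distrC ger0_norm; lra.
have us_gt0 : 0 < u - s by rewrite subr_gt0.
rewrite -(pmulr_llt0 _ us_gt0) -E.
have : b < y u by apply: byt'; lra.
lra.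
Qed.

Lemma scalar_solutionN (G y : R -> R) : scalar_solution G y ->
  scalar_solution (fun z => - G (- z)) (fun t => - y t).
Proof.
move=> [cy dy]; split; first by move=> t; apply: continuousN; exact: cy.
by move=> t t0; rewrite opprK; exact: is_deriveN (dy t t0).
Qed.

End ScalarODE.

Section Bernoulli.
Context {R : realType}.

Lemma is_derive_expRM (a t : R) : is_derive t 1 (fun s => expR (a * s)) (expR (a * t) * a).
Proof.
have := is_derive1_comp (is_derive_expR (a * t)) (is_deriveZ a (is_derive_id t 1)).
by move=> h; apply: is_derive_eq h _; rewrite [_%:A]mulr1.
Qed.

Definition bernoulli (kap lam : R) (p : nat) (z : R) := z * (kap + lam * z ^+ p).

Lemma bernoulli_lt0_right kap lam p b : 0 <= b -> kap + lam * b ^+ p < 0 ->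
  \forall z \near b^'+, bernoulli kap lam p z < 0.
Proof.
move=> b0 rate_b; have rate_cvg : kap + lam * z ^+ p @[z --> b] --> kap + lam * b ^+ p.
  by apply: cvgD; [exact: cvg_cst | apply: cvgM; [exact: cvg_cst | exact: exprn_continuous]].
near=> z; rewrite /bernoulli pmulr_rlt0.
- by near: z; apply: cvg_within; exact: cvgr_lt _ rate_cvg _ rate_b.
- by apply: le_lt_trans b0 _; near: z; exact: nbhs_right_gt.
Unshelve. all: by end_near. Qed.

Lemma bernoulliN kap lam p z :
  - bernoulli kap lam p (- z) = bernoulli kap ((-1) ^+ p * lam) p z.
Proof. by rewrite /bernoulli [(- z) ^+ _]exprNn; ring. Qed.

Lemma bernoulli_solutionN kap lam p y :
  scalar_solution (bernoulli kap lam p) y ->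
  scalar_solution (bernoulli kap ((-1) ^+ p * lam) p) (fun t => - y t).
Proof.
move=> /scalar_solutionN; congr scalar_solution.
by apply/funext => z; exact: bernoulliN.
Qed.

Lemma bernoulli_rate_le (kap lam : R) p (z b : R) : 0 <= z <= b ->
  kap + lam * z ^+ p <= Num.max kap (kap + lam * b ^+ p).
Proof.
move=> /andP[z0 zb]; rewrite le_max; case: (leP 0 lam) => lam0.
  by rewrite lerD2l ler_wpM2l ?orbT // lerXn2r // nnegrE (le_trans z0).
by rewrite gerDl nmulr_rle0 ?exprn_ge0.
Qed.

Section BernoulliSolution.
Variables (kap lam : R) (p : nat) (y : R -> R).
Hypotheses (kap_lt0 : kap < 0) (p_gt0 : (0 < p)%N).
Hypothesis ys : scalar_solution (bernoulli kap lam p) y.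

Lemma bernoulli_solution_between : 0 <= y 0 -> kap + lam * y 0 ^+ p < 0 ->
  forall t, 0 <= t -> 0 <= y t <= y 0.
Proof.
move=> y00 rate0 t t0; apply/andP; split.
- rewrite -oppr_le0; apply: (scalar_solution_le (bernoulli_solutionN ys)) => //.
    by apply: bernoulli_lt0_right; rewrite // expr0n gtn_eqF // mulr0 addr0.
  by rewrite oppr_le0.
- exact: scalar_solution_le ys (bernoulli_lt0_right y00 rate0) (lexx _) t t0.
Qed.

Lemma bernoulli_solution_cvg0 : 0 <= y 0 -> kap + lam * y 0 ^+ p < 0 ->
  y t @[t --> +oo] --> 0.
Proof.
move=> y00 rate0; have between := bernoulli_solution_between y00 rate0.
set d := - Num.max kap (kap + lam * y 0 ^+ p).
have d_gt0 : 0 < d by rewrite oppr_gt0 gt_max kap_lt0.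
have rate_le t : 0 <= t -> d + (kap + lam * y t ^+ p) <= 0.
  by move=> t0; have := bernoulli_rate_le kap lam p (between t t0); rewrite /d; lra.
pose W t := y t * expR (d * t).
have dW (t : R) : 0 < t ->
    is_derive t 1 W (expR (d * t) * y t * (d + (kap + lam * y t ^+ p))).
  move=> t0; have := is_deriveM (ys.2 t t0) (is_derive_expRM d t).
  by move=> h; apply: is_derive_eq h _; rewrite /bernoulli /GRing.scale /=; ring.
have W_le t : 0 <= t -> W t <= y 0.
  have -> : y 0 = W 0 by rewrite /W mulr0 expR0 mulr1.
  move=> t0; apply: (@ler0_derive1_nincry _ W 0) => //.
  - by move=> x /[!in_itv] /= /andP[x0 _]; have [] := dW x x0.
  - move=> x /[!in_itv] /= /andP[x0 _]; rewrite derive1E; have [_ ->] := dW x x0.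
    have /andP[yx0 _] := between x (ltW x0).
    by rewrite mulr_ge0_le0 ?mulr_ge0 ?expR_ge0 // rate_le // ltW.
  - have cexp : continuous (fun u : R => expR (d * u)).
      by move=> u; exact: continuous_comp (@mulrl_continuous _ d u) (@continuous_expR _ _).
    by move=> x; apply: cvgM; [exact: ys.1 | exact: continuous_subspaceT cexp x].
apply: (@squeeze_cvgr _ _ _ _ (fun=> 0) (fun t => y 0 * expR (- (d * t)))).
- near=> t; have t0 : 0 <= t by near: t; apply: nbhs_pinfty_ge.
  have /andP[-> _] /= := between t t0.
  by rewrite expRN ler_pdivlMr ?expR_gt0 //; exact: W_le.
- exact: cvg_cst.
- rewrite -[X in _ --> X](mulr0 (y 0)); apply: cvgM; first exact: cvg_cst.
  have dy : d * t @[t --> +oo] --> +oo by apply: gt0_cvgMry d_gt0 _; exact: cvg_id.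
  exact: cvg_comp _ _ dy (@cvgr_expR R).
Unshelve. all: by end_near. Qed.

End BernoulliSolution.

Lemma bernoulli_solution_shrinks (kap lam : R) p (y : R -> R) : kap < 0 -> (0 < p)%N ->
  scalar_solution (bernoulli kap lam p) y -> kap + lam * y 0 ^+ p < 0 ->
  (forall t, 0 <= t -> exists2 th, 0 <= th <= 1 & y t = th * y 0) /\
  (y t @[t --> +oo] --> 0).
Proof.
move=> kap_lt0 p_gt0; wlog y00 : lam y / 0 <= y 0 => [wlog_nonneg ys rate0|ys rate0].
  have [y00|y0_lt0] := leP 0 (y 0); first exact: wlog_nonneg y00 ys rate0.
  have [||shrink cvg0] := wlog_nonneg _ _ _ (bernoulli_solutionN ys).
  - by rewrite oppr_ge0 ltW.
  - by rewrite [(- y 0) ^+ _]exprNn mulrACA -expr2 sqrr_sign mul1r.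
  split; last by apply/cvgNP; rewrite oppr0.
  move=> t t0; have [th th01 yt] := shrink t t0.
  by exists th => //; apply: oppr_inj; rewrite yt mulrN.
split; last exact: bernoulli_solution_cvg0 kap_lt0 p_gt0 ys y00 rate0.
move=> t t0; have /andP[yt0 yty0] := bernoulli_solution_between kap_lt0 p_gt0 ys y00 rate0 t0.
have [y0_eq0|y0_neq0] := eqVneq (y 0) 0.
  by exists 0; rewrite ?lexx ?ler01 // mul0r; apply/eqP; rewrite eq_le yt0 -y0_eq0 yty0.
exists (y t / y 0); last by rewrite divfK.
have y0_gt0 : 0 < y 0 by rewrite lt_def y0_neq0.
by rewrite divr_ge0 //= ler_pdivrMr // mul1r.
Qed.

Section BernoulliFlow.
Variables (kap lam : R) (p : nat) (y0 : R).
Hypotheses (kap_lt0 : kap < 0) (p_gt0 : (0 < p)%N).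
Hypothesis rate0 : kap + lam * y0 ^+ p < 0.

Let mu := lam * y0 ^+ p / kap.
Let D t := 1 + mu * (1 - expR (p%:R * kap * t)).

(* [z = y^-p] solves the linear equation [z' = -p (kap z + lam)]. *)
Definition bernoulli_flow t := y0 * expR (kap * t) * D t `^ (- p%:R^-1).

Lemma bernoulli_flow0 : bernoulli_flow 0 = y0.
Proof. by rewrite /bernoulli_flow /D !mulr0 expR0 subrr mulr0 addr0 powR1 !mulr1. Qed.

Lemma bernoulli_flow_denom_gt0 t : 0 <= t -> 0 < D t.
Proof.
move=> t0; have e_le1 : expR (p%:R * kap * t) <= 1.
  by rewrite expR_le1 mulr_le0_ge0 // mulr_ge0_le0 // ltW.
have e_gt0 := expR_gt0 (p%:R * kap * t).
have mu1_gt0 : 0 < 1 + mu.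
  move: rate0.
  have <- : kap * (1 + mu) = kap + lam * y0 ^+ p by rewrite /mu; field; rewrite lt_eqF.
  by rewrite nmulr_rlt0.
rewrite /D; have [mu0|mu0] := leP 0 mu.
  by rewrite ltr_wpDr // mulr_ge0 // subr_ge0.
by rewrite mulrBr mulr1 addrA ltr_wpDr // -mulNr mulr_ge0 // ?oppr_ge0 ltW.
Qed.

Lemma is_derive_bernoulli_flow (t : R) : 0 <= t ->
  is_derive t 1 bernoulli_flow (bernoulli kap lam p (bernoulli_flow t)).
Proof.
move=> t0; have Dt_gt0 := bernoulli_flow_denom_gt0 t0.
have dD : is_derive t 1 D (- mu * (expR (p%:R * kap * t) * (p%:R * kap))).
  have := is_deriveD (is_derive_cst (1 : R) t 1)
    (is_deriveZ mu (is_deriveB (is_derive_cst (1 : R) t 1) (is_derive_expRM (p%:R * kap) t))).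
  by move=> h; apply: is_derive_eq h _; rewrite /GRing.scale /=; ring.
have := is_deriveM (is_deriveZ y0 (is_derive_expRM kap t))
  (is_derive1_comp (is_derive1_powR (- p%:R^-1) Dt_gt0) dD).
move=> h; apply: is_derive_eq h _.
have Dt_neq0 : D t != 0 by rewrite gt_eqF.
have p_neq0 : p%:R != 0 :> R by rewrite pnatr_eq0 -lt0n.
have powD_pred : D t `^ (- p%:R^-1 - 1) = D t `^ (- p%:R^-1) / D t.
  by rewrite powRD ?Dt_neq0 ?implybT // powR_inv1 // ltW.
have powD_exp : (D t `^ (- p%:R^-1)) ^+ p = (D t)^-1.
  by rewrite -powR_mulrn ?powR_ge0 // -powRrM mulNr mulVf // powR_inv1 // ltW.
have expR_exp : expR (kap * t) ^+ p = expR (p%:R * kap * t) by rewrite -expRM_natl mulrA.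
rewrite /bernoulli /bernoulli_flow /GRing.scale /= powD_pred !exprMn powD_exp expR_exp.
by rewrite /mu /GRing.scale /=; field; rewrite Dt_neq0 lt_eqF.
Qed.

End BernoulliFlow.

End Bernoulli.

Section Coordinates.
Context {R : realType} {n : nat}.
Implicit Types (u x : 'cV[R]_n) (c : 'I_n -> R) (v : 'I_n -> 'cV[R]_n).

Lemma sum_scalemx_entry m1 m2 c (w : 'I_n -> 'M[R]_(m1, m2)) i j :
  (\sum_s c s *: w s) i j = \sum_s c s * w s i j.
Proof. by rewrite summxE; apply: eq_bigr => s _; rewrite mxE. Qed.

Lemma dotv_sumZ u c v : dotv u (\sum_s c s *: v s) = \sum_s c s * dotv u (v s).
Proof.
rewrite /dotv; under eq_bigr do rewrite sum_scalemx_entry mulr_sumr.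
rewrite exchange_big; apply: eq_bigr => s _; rewrite mulr_sumr.
by apply: eq_bigr => i _; rewrite mulrCA.
Qed.

Lemma Kmat_mulmx kap v x : Kmat kap v *m x = \sum_s (kap s * dotv (v s) x) *: v s.
Proof.
apply/matrixP => i j; rewrite (ord1 j) sum_scalemx_entry !mxE.
under eq_bigr do rewrite sum_scalemx_entry mulr_suml.
rewrite exchange_big; apply: eq_bigr => s _.
rewrite /dotv mulr_sumr mulr_suml; apply: eq_bigr => l _.
by rewrite mxE big_ord1 !mxE; ring.
Qed.

Lemma tapply_odeco k lam v x :
  tapply (@odeco_tensor R n k.+1 lam v) x = \sum_s (lam s * dotv (v s) x ^+ k) *: v s.
Proof.
apply/matrixP => i j; rewrite (ord1 j) sum_scalemx_entry !mxE big_mkcond /=.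
(* [G] turns each summand into a product over positions; position [0] carries
   the indicator of [idx 0 = i], so that [bigA_distr_bigA] applies. *)
pose G r (j : 'I_k.+1) m := if val j == 0%N then (m == i)%:R * v r m 0 else v r m 0 * x m 0.
have summandE (idx : {ffun 'I_k.+1 -> 'I_n}) :
  (if [forall j, (val j == 0%N) ==> (idx j == i)] then
     @odeco_tensor R n k.+1 lam v idx * \prod_(j < k.+1 | val j != 0%N) x (idx j) 0 else 0)
  = \sum_r lam r * \prod_j G r j (idx j).
  have -> : [forall j, (val j == 0%N) ==> (idx j == i)] = (idx ord0 == i).
    apply/forallP/idP => [/(_ ord0) //| idx0 l]; apply/implyP => /eqP l0.
    by rewrite (_ : l = ord0) //; apply/val_inj.
  have [idx0|idx0] := eqVneq (idx ord0) i; last first.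
    by rewrite big1 // => r _; rewrite big_ord_recl /G /= (negPf idx0) !mul0r mulr0.
  rewrite /odeco_tensor mulr_suml; apply: eq_bigr => r _.
  rewrite /tpow !big_ord_recl [\prod_(j < k.+1 | _) _]big_mkcond big_ord_recl /G /=.
  rewrite idx0 eqxx mul1r big_split /=; ring.
under eq_bigr do rewrite summandE.
rewrite exchange_big; apply: eq_bigr => r _.
rewrite -mulr_sumr -(bigA_distr_bigA (G r)) big_ord_recl /G /=.
rewrite (bigD1 i) //= eqxx mul1r big1 ?addr0 => [|m /negPf->]; last by rewrite mul0r.
by rewrite prodr_const card_ord /dotv; ring.
Qed.

Lemma vfield_decoupled p kap lam v x : vfield p.+2 kap lam v x =
  \sum_s bernoulli (kap s) (lam s) p (dotv (v s) x) *: v s.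
Proof.
rewrite /vfield Kmat_mulmx tapply_odeco -big_split /=.
by apply: eq_bigr => s _; rewrite -scalerDl /bernoulli exprS; congr (_ *: _); ring.
Qed.

Lemma is_derive_mxP m1 m2 (M : R -> 'M[R]_(m1, m2)) (t : R) (D : 'M[R]_(m1, m2)) :
  is_derive t 1 M D <-> forall i j, is_derive t 1 (fun s => M s i j) (D i j).
Proof.
split=> [dM i j|dMij].
  have [dMt dMval] := dM; apply: DeriveDef; first by move/derivable_mxP: dMt; apply.
  by move: (derive_mx dMt); rewrite dMval => ->; rewrite mxE.
have dMt : derivable M t 1 by apply/derivable_mxP => i j; have [] := dMij i j.
apply: DeriveDef => //; rewrite derive_mx //.
by apply/matrixP => i j; rewrite mxE; have [_ ->] := dMij i j.
Qed.

Lemma dotv_continuous u : continuous (dotv u).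
Proof.
apply: continuous_big => [|i _]; first exact: add_continuous.
by move=> x; apply: continuousM; [exact: cst_continuous | exact: coord_continuous].
Qed.

Lemma is_derive_dotv u (x : R -> 'cV[R]_n) (t : R) dx :
  is_derive t 1 x dx -> is_derive t 1 (fun s => dotv u (x s)) (dotv u dx).
Proof.
move=> /is_derive_mxP dx_ij.
have := is_derive_sum (fun i => is_deriveZ (u i 0) (dx_ij i 0)).
by rewrite fct_sumE => h; apply: is_derive_eq h _.
Qed.

Lemma is_derive_sumZ (phi : 'I_n -> R -> R) v (t : R) dphi :
  (forall r, is_derive t 1 (phi r) (dphi r)) ->
  is_derive t 1 (fun s => \sum_r phi r s *: v r) (\sum_r dphi r *: v r).
Proof.
move=> dphi_r; apply/is_derive_mxP => i j.
rewrite (_ : (fun s => _) = fun s => \sum_r v r i j * phi r s); last first.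
  by apply/funext => s; rewrite sum_scalemx_entry; apply: eq_bigr => r _; rewrite mulrC.
have := is_derive_sum (fun r => is_deriveZ (v r i j) (dphi_r r)).
rewrite fct_sumE => h; apply: is_derive_eq h _.
by rewrite sum_scalemx_entry; apply: eq_bigr => r _; rewrite mulrC.
Qed.

Section Orthonormal.
Variable v : 'I_n -> 'cV[R]_n.
Hypothesis v_orthonormal : forall r s, dotv (v r) (v s) = (r == s)%:R.

Lemma dotv_orthonormal_sumZ c r : dotv (v r) (\sum_s c s *: v s) = c r.
Proof.
rewrite dotv_sumZ (bigD1 r) //= v_orthonormal eqxx mulr1 big1 ?addr0 // => s sr.
by rewrite v_orthonormal eq_sym (negPf sr) mulr0.
Qed.

Lemma orthonormal_expansion x : x = \sum_s dotv (v s) x *: v s.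
Proof.
pose V : 'M[R]_n := \matrix_(i, j) v j i 0.
have VtV : V^T *m V = 1%:M.
  apply/matrixP => r s; rewrite !mxE -v_orthonormal /dotv.
  by apply: eq_bigr => i _; rewrite !mxE.
apply/matrixP => i j; rewrite (ord1 j) sum_scalemx_entry.
have -> : x i 0 = (V *m (V^T *m x)) i 0 by rewrite mulmxA (mulmx1C VtV) mul1mx.
rewrite mxE; apply: eq_bigr => s _; rewrite !mxE mulrC; congr (_ * _).
by apply: eq_bigr => l _; rewrite !mxE.
Qed.

Section Decoupled.
Variables (p : nat) (kap lam : 'I_n -> R).
Hypotheses (kap_lt0 : forall r, kap r < 0) (p_gt0 : (0 < p)%N).

Lemma global_solution_coord x0 (x : R -> 'cV[R]_n) :
  global_solution (vfield p.+2 kap lam v) x0 x ->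
  forall r, scalar_solution (bernoulli (kap r) (lam r) p) (fun t => dotv (v r) (x t)).
Proof.
move=> [_ [cx dx]] r; split.
  by apply: within_continuous_comp cx => y _; exact: dotv_continuous.
move=> t t0; have := is_derive_dotv (v r) (dx t t0).
by rewrite vfield_decoupled dotv_orthonormal_sumZ.
Qed.

Lemma global_solution_sumZ x0 (phi : 'I_n -> R -> R) :
  (forall r, phi r 0 = dotv (v r) x0) ->
  (forall r (t : R), 0 <= t ->
    is_derive t 1 (phi r) (bernoulli (kap r) (lam r) p (phi r t))) ->
  global_solution (vfield p.+2 kap lam v) x0 (fun t => \sum_r phi r t *: v r).
Proof.
move=> phi0 dphi.
have dx (t : R) : 0 <= t -> is_derive t 1 (fun s => \sum_r phi r s *: v r)
    (vfield p.+2 kap lam v (\sum_r phi r t *: v r)).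
  move=> t0; rewrite vfield_decoupled.
  under eq_bigr do rewrite dotv_orthonormal_sumZ.
  exact: is_derive_sumZ (fun r => dphi r t t0).
split; [|split].
- by rewrite [RHS]orthonormal_expansion; apply: eq_bigr => r _; rewrite phi0.
- apply: derivable_within_continuous => t; rewrite in_itv /= andbT => t0.
  by have [] := dx t t0.
- by move=> t t0; apply: dx; rewrite ltW.
Qed.

Lemma stable_region_decoupled (S : 'cV[R]_n -> Prop) :
  (forall x0, S x0 -> forall r, kap r + lam r * dotv (v r) x0 ^+ p < 0) ->
  (forall x0 x, S x0 ->
    (forall r, exists2 th, 0 <= th <= 1 & dotv (v r) x = th * dotv (v r) x0) -> S x) ->
  stable_region (vfield p.+2 kap lam v) S.
Proof.
move=> S_rate S_shrink x0 Sx0; split.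
  exists (fun t => \sum_r bernoulli_flow (kap r) (lam r) p (dotv (v r) x0) t *: v r).
  apply: global_solution_sumZ => r; first exact: bernoulli_flow0.
  by move=> t; apply: is_derive_bernoulli_flow => //; exact: S_rate.
move=> x xsol; have ysol := global_solution_coord xsol.
have y0 r : dotv (v r) (x 0) = dotv (v r) x0 by rewrite xsol.1.
have rate0 r : kap r + lam r * dotv (v r) (x 0) ^+ p < 0 by rewrite y0; exact: S_rate.
have shrink r := bernoulli_solution_shrinks (kap_lt0 r) p_gt0 (ysol r) (rate0 r).
split.
- have -> : x = fun t => \sum_r dotv (v r) (x t) *: v r.
    by apply/funext => t; exact: orthonormal_expansion.
  have sum0 : \sum_r 0 *: v r = 0 by rewrite big1 // => r _; rewrite scale0r.
  rewrite -[X in _ --> X]sum0; apply: (cvg_big add_continuous) => r _.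
  exact: cvgZ (shrink r).2 (cvg_cst _).
- move=> t t0; apply: S_shrink Sx0 _ => r.
  by have [th th01 yt] := (shrink r).1 t t0; exists th; rewrite // -y0.
Qed.

End Decoupled.

End Orthonormal.
End Coordinates.

Section Thresholds.
Context {R : realType}.
Variables (p : nat) (kap : R).
Hypotheses (p_gt0 : (0 < p)%N) (kap_lt0 : kap < 0).

Lemma cthr_gt0 (lam : R) : 0 < lam -> 0 < cthr p kap lam.
Proof. by move=> lam_gt0; rewrite /cthr lam_gt0 powR_gt0 // divr_gt0 // oppr_gt0. Qed.

Lemma cthrN (lam : R) : lam < 0 -> cthr p kap lam = - cthr p kap (- lam).
Proof.
move=> lam_lt0; rewrite /cthr oppr_gt0 lam_lt0 ltNge ltW //=.
by rewrite invrN mulrNN.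
Qed.

Lemma rate_lt0_below_cthr (lam z : R) : 0 < lam -> 0 <= z -> z < cthr p kap lam ->
  kap + lam * z ^+ p < 0.
Proof.
move=> lam_gt0 z0 zc.
have cp : cthr p kap lam ^+ p = - kap / lam.
  rewrite /cthr lam_gt0 -powR_mulrn ?powR_ge0 // -powRrM mulVf ?pnatr_eq0 -?lt0n //.
  by rewrite powRr1 // divr_ge0 ?oppr_ge0 // ltW.
have : z ^+ p < - kap / lam by rewrite -cp ltrXn2r -?lt0n // nnegrE ltW // cthr_gt0.
by rewrite ltr_pdivlMr // mulrC -subr_lt0 opprK addrC.
Qed.

Lemma Reven_rate (lam y : R) : ~~ odd p ->
  (0 < lam -> `|y| < cthr p kap lam) -> kap + lam * y ^+ p < 0.
Proof.
move=> p_even y_below; have [lam_le0|lam_gt0] := leP lam 0.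
  by rewrite -[0]addr0 ltr_leD // mulr_le0_ge0 // exprn_even_ge0.
rewrite -(ger0_norm (exprn_even_ge0 y p_even)) normrX.
exact: rate_lt0_below_cthr (y_below lam_gt0).
Qed.

Lemma Rodd_rate (lam y : R) : odd p ->
  (0 < lam -> y < cthr p kap lam) -> (lam < 0 -> cthr p kap lam < y) ->
  kap + lam * y ^+ p < 0.
Proof.
move=> p_odd y_below y_above.
have [lam_lt0|lam_gt0|->] := ltgtP lam 0; last by rewrite mul0r addr0.
- have [y_ge0|y_lt0] := leP 0 y.
    by rewrite -[0]addr0 ltr_leD // nmulr_rle0 // exprn_odd_ge0.
  have -> : lam * y ^+ p = - lam * (- y) ^+ p.
    by rewrite exprNn -signr_odd p_odd expr1 mulN1r mulrNN.
  apply: rate_lt0_below_cthr; rewrite ?oppr_gt0 ?oppr_ge0 ?ltW //.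
  by rewrite ltrNl -cthrN // y_above.
- have [y_le0|y_gt0] := leP y 0.
    by rewrite -[0]addr0 ltr_leD // pmulr_rle0 // exprn_odd_le0.
  exact: rate_lt0_below_cthr (ltW y_gt0) (y_below lam_gt0).
Qed.

Lemma Reven_shrink (lam y th : R) : 0 <= th <= 1 ->
  (0 < lam -> `|y| < cthr p kap lam) -> 0 < lam -> `|th * y| < cthr p kap lam.
Proof.
move=> /andP[th0 th1] y_below lam_gt0; rewrite normrM ger0_norm //.
by apply: le_lt_trans (y_below lam_gt0); rewrite ler_piMl.
Qed.

Lemma Rodd_shrink (lam y th : R) : 0 <= th <= 1 ->
  (0 < lam -> y < cthr p kap lam) -> (lam < 0 -> cthr p kap lam < y) ->
  (0 < lam -> th * y < cthr p kap lam) /\ (lam < 0 -> cthr p kap lam < th * y).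
Proof.
move=> /andP[th0 th1] y_below y_above; split=> [lam_gt0|lam_lt0].
  have := cthr_gt0 lam_gt0; have := y_below lam_gt0; case: (leP y 0); nra.
have : cthr p kap lam < 0 by rewrite cthrN // oppr_lt0 cthr_gt0 // oppr_gt0.
have := y_above lam_lt0; case: (leP y 0); nra.
Qed.

End Thresholds.

Theorem theorem2 (R : realType) (n k : nat) (hn : (1 <= n)%N) (hk : (3 <= k)%N)
  (v : 'I_n -> 'cV[R]_n)
  (hv : forall r s : 'I_n, dotv (v r) (v s) = (r == s)%:R)
  (lam kap : 'I_n -> R) (hkap : forall r, kap r < 0) :
  let p := (k - 2)%N in
  let F := vfield k kap lam v in
  (~~ odd p -> stable_region F (Reven p kap lam v)) /\
  (odd p -> stable_region F (Rodd p kap lam v)).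
Proof.
case: k hk => [|[|[|q]]] // _ p F; rewrite {}/p {}/F -[(q.+3 - 2)%N]/q.+1.
have p_gt0 : (0 < q.+1)%N by [].
split=> p_parity; apply: stable_region_decoupled => // [x0 x0_in r|x0 x x0_in x_shrinks r].
- exact: (Reven_rate p_gt0 (hkap r) p_parity (x0_in r)).
- by have [th th01 ->] := x_shrinks r; exact: (Reven_shrink th01 (x0_in r)).
- by have [below above] := x0_in r; exact: (Rodd_rate p_gt0 (hkap r) p_parity below above).
- have [th th01 ->] := x_shrinks r; have [below above] := x0_in r.
  exact: (Rodd_shrink (hkap r) th01 below above).
Qed.
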